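(* For all integers $n\ge0$ and $p\ge1$, $$\mathcal{B}_{n,p}=p!\int_0^1dx_p\int_0^{x_p}dx_{p-1}\cdots\int_0^{x_2}\phi_n(x_1)\,dx_1,$$ i.e. $\mathcal{B}_{n,p}$ equals $p!$ times the $p$-fold iterated integral from $0$ of $\phi_n$, evaluated at $x=1$.
   Context: $S(n,k)$ denotes the Stirling numbers of the second kind and $\phi_n(x)=\sum_{k=0}^nS(n,k)x^k$ are the single-variable Bell (exponential) polynomials. For an integer $p\ge0$, the $p$-Bell numbers $\mathcal{B}_{n,p}$ are defined by $\sum_{n\ge0}\mathcal{B}_{n,p}\frac{z^n}{n!}=\sum_{n\ge0}\binom{n+p}{p}^{-1}\frac{(e^z-1)^n}{n!}$. *)

From Stdlib Require Import Reals Arith.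
From Coquelicot Require Import Coquelicot.
Open Scope R_scope.

Fixpoint stirling2 (n k : nat) : nat :=
  match n, k with
  | O, O => 1%nat
  | O, S _ => 0%nat
  | S _, O => 0%nat
  | S n', S k' => (S k' * stirling2 n' (S k') + stirling2 n' k')%nat
  end.

Definition bell_poly (n : nat) (x : R) : R :=
  sum_f_R0 (fun k => INR (stirling2 n k) * x ^ k) n.

Definition fps := nat -> R.
Definition fps_mul (a b : fps) : fps :=
  fun n => sum_f_R0 (fun i => a i * b (n - i)%nat) n.
Definition fps_one : fps := fun n => if Nat.eqb n 0 then 1 else 0.
Fixpoint fps_pow (a : fps) (k : nat) : fps :=
  match k with
  | O => fps_one
  | S k' => fps_mul a (fps_pow a k')
  end.
Definition exp_minus_one : fps :=
  fun m => if Nat.eqb m 0 then 0 else / INR (fact m).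

(* p-Bell numbers: n! times the coefficient of z^n in
   sum_{k>=0} binom(k+p,p)^{-1} (e^z-1)^k / k!.
   Terms with k > n contribute nothing to the z^n coefficient, since
   (e^z-1)^k has valuation k; so the sum over k is truncated at n. *)
Definition pBell (n p : nat) : R :=
  INR (fact n) *
  sum_f_R0 (fun k => / Binomial.C (k + p) p * fps_pow exp_minus_one k n / INR (fact k)) n.

Fixpoint iter_int (p : nat) (f : R -> R) : R -> R :=
  match p with
  | O => f
  | S p' => fun x => RInt (iter_int p' f) 0 x
  end.

From Stdlib Require Import Reals Arith Lia FunctionalExtensionality.
From Coquelicot Require Import Coquelicot.
Open Scope R_scope.

(* Integrating [p] times turns [phi_n] into [sum_k S(n,k) k!/(k+p)! x^(k+p)].
   On the other side, the z^n coefficient of (e^z-1)^k is [k! S(n,k) / n!]: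
   formal differentiation gives D((e^z-1)^(k+1)) = (k+1)((e^z-1)^(k+1) + (e^z-1)^k),
   which on coefficients is exactly the recurrence of the Stirling numbers.
   Since [1/C(k+p,p) = k! p!/(k+p)!], the two sums agree term by term at x = 1. *)

Lemma is_RInt_sum_f_R0 (f : nat -> R -> R) (I : nat -> R) (a b : R) (N : nat) :
  (forall k, (k <= N)%nat -> is_RInt (f k) a b (I k)) ->
  is_RInt (fun t => sum_f_R0 (fun k => f k t) N) a b (sum_f_R0 I N).
Proof.
  induction N as [|N IHN]; intros HI.
  - exact (HI 0%nat (Nat.le_refl 0)).
  - apply (is_RInt_plus (V:=R_NormedModule)).
    + apply IHN; intros k Hk; apply HI; lia.
    + apply HI; lia.
Qed.

Lemma is_RInt_pow_0 (j : nat) (x : R) :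
  is_RInt (fun t => t ^ j) 0 x (x ^ S j / INR (S j)).
Proof.
  replace (x ^ S j / INR (S j)) with (x ^ S j / INR (S j) - 0 ^ S j / INR (S j)).
  - exact (is_RInt_pow 0 x j).
  - simpl; unfold Rdiv; ring.
Qed.

Lemma iter_int_bell_poly (n p : nat) (x : R) :
  iter_int p (bell_poly n) x =
  sum_f_R0 (fun k => INR (stirling2 n k) * (INR (fact k) / INR (fact (k + p))) * x ^ (k + p)) n.
Proof.
  revert x; induction p as [|p IHp]; intros x; cbn [iter_int].
  - unfold bell_poly; apply sum_eq; intros k _.
    rewrite Nat.add_0_r; field; apply INR_fact_neq_0.
  - replace (iter_int p (bell_poly n)) with (fun t =>
      sum_f_R0 (fun k => INR (stirling2 n k) * (INR (fact k) / INR (fact (k + p))) * t ^ (k + p)) n)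
      by (symmetry; apply functional_extensionality, IHp).
    apply is_RInt_unique, is_RInt_sum_f_R0; intros k _.
    replace (k + S p)%nat with (S (k + p)) by lia.
    rewrite fact_simpl, mult_INR.
    assert (INR (S (k + p)) <> 0) by (apply not_0_INR; lia).
    assert (INR (fact (k + p)) <> 0) by apply INR_fact_neq_0.
    replace (_ * (_ / (_ * _)) * _) with
      (INR (stirling2 n k) * (INR (fact k) / INR (fact (k + p))) * (x ^ S (k + p) / INR (S (k + p))))
      by (field; auto).
    apply (is_RInt_scal (V:=R_NormedModule) (fun t => t ^ (k + p))), is_RInt_pow_0.
Qed.

Definition fps_deriv (a : fps) : fps := fun n => INR (S n) * a (S n).

Section FpsAlgebra.

Implicit Types a b c : fps.

Lemma fps_mul_extl a a' b n :
  (forall m, a m = a' m) -> fps_mul a b n = fps_mul a' b n.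
Proof. intros H; apply sum_eq; intros i _; rewrite H; reflexivity. Qed.

Lemma fps_mul_extr a b b' n :
  (forall m, b m = b' m) -> fps_mul a b n = fps_mul a b' n.
Proof. intros H; apply sum_eq; intros i _; rewrite H; reflexivity. Qed.

Lemma fps_mulDl a b c n :
  fps_mul (fun m => a m + b m) c n = fps_mul a c n + fps_mul b c n.
Proof. unfold fps_mul; rewrite <- plus_sum; apply sum_eq; intros; ring. Qed.

Lemma fps_mulDr a b c n :
  fps_mul a (fun m => b m + c m) n = fps_mul a b n + fps_mul a c n.
Proof. unfold fps_mul; rewrite <- plus_sum; apply sum_eq; intros; ring. Qed.

Lemma fps_mulZr a b r n :
  fps_mul a (fun m => r * b m) n = r * fps_mul a b n.
Proof. unfold fps_mul; rewrite scal_sum; apply sum_eq; intros; ring. Qed.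

Lemma fps_mul1l a n : fps_mul fps_one a n = a n.
Proof.
  unfold fps_mul, fps_one; destruct n as [|n].
  - simpl; ring.
  - rewrite decomp_sum by lia; simpl pred.
    rewrite sum_eq_R0 by (intros; simpl; ring).
    simpl; ring.
Qed.

Lemma fps_mul1r a n : fps_mul a fps_one n = a n.
Proof.
  unfold fps_mul, fps_one; destruct n as [|n].
  - simpl; ring.
  - rewrite tech5, Nat.sub_diag, sum_eq_R0; [simpl; ring|].
    intros i Hi; replace (Nat.eqb (S n - i) 0) with false; [ring|].
    symmetry; apply Nat.eqb_neq; lia.
Qed.

(* Split the weight [n+1] of the product coefficient as [i + (n+1-i)]. *)
Lemma fps_deriv_mul a b n :
  fps_deriv (fps_mul a b) n = fps_mul (fps_deriv a) b n + fps_mul a (fps_deriv b) n.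
Proof.
  unfold fps_deriv, fps_mul; rewrite scal_sum.
  rewrite (sum_eq _ (fun i => INR i * (a i * b (S n - i)%nat)
                             + INR (S n - i) * (a i * b (S n - i)%nat))).
  2:{ intros i Hi; rewrite <- Rmult_plus_distr_r, <- plus_INR.
      replace (i + (S n - i))%nat with (S n) by lia; ring. }
  rewrite plus_sum; f_equal.
  - rewrite decomp_sum by lia; simpl pred.
    rewrite Rmult_0_l, Rplus_0_l; apply sum_eq; intros i _.
    simpl (S n - S i)%nat; ring.
  - rewrite tech5, Nat.sub_diag; simpl (INR 0); rewrite Rmult_0_l, Rplus_0_r.
    apply sum_eq; intros i Hi.
    replace (S n - i)%nat with (S (n - i)) by lia; ring.
Qed.

End FpsAlgebra.

Lemma fps_deriv_exp_minus_one n :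
  fps_deriv exp_minus_one n = exp_minus_one n + fps_one n.
Proof.
  unfold fps_deriv, exp_minus_one, fps_one; destruct n as [|n]; simpl Nat.eqb; cbv iota.
  - simpl; field.
  - rewrite (fact_simpl (S n)), mult_INR.
    assert (INR (fact (S n)) <> 0) by apply INR_fact_neq_0.
    assert (INR (S (S n)) <> 0) by (apply not_0_INR; lia).
    field; auto.
Qed.

Notation E := (fps_pow exp_minus_one).

Lemma fps_deriv_pow_exp_minus_one k n :
  fps_deriv (E (S k)) n = INR (S k) * (E (S k) n + E k n).
Proof.
  revert n; induction k as [|k IHk]; intros n;
    change (E (S ?j)) with (fps_mul exp_minus_one (E j)); rewrite fps_deriv_mul.
  - rewrite (fps_mul_extr _ (fps_deriv fps_one) (fun _ => 0 * fps_one 0%nat))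
      by (intros m; unfold fps_deriv, fps_one; simpl; ring).
    rewrite fps_mulZr, (fps_mul_extl _ (fun m => exp_minus_one m + fps_one m))
      by apply fps_deriv_exp_minus_one.
    rewrite fps_mulDl, !fps_mul1r; simpl; ring.
  - rewrite (fps_mul_extr _ _ _ _ IHk), fps_mulZr, fps_mulDr.
    rewrite (fps_mul_extl _ (fun m => exp_minus_one m + fps_one m))
      by apply fps_deriv_exp_minus_one.
    rewrite fps_mulDl, fps_mul1l.
    change (E (S k) n) with (fps_mul exp_minus_one (E k) n).
    rewrite (S_INR (S k)); ring.
Qed.

Lemma coef_pow_exp_minus_one n k :
  E k n = INR (fact k) * INR (stirling2 n k) / INR (fact n).
Proof.
  revert k; induction n as [|n IHn]; intros [|k].
  - simpl; unfold fps_one; simpl; field.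
  - unfold fps_pow, fps_mul, exp_minus_one; simpl; field.
  - simpl; unfold fps_one; simpl; unfold Rdiv; ring.
  - assert (HSn : INR (S n) <> 0) by (apply not_0_INR; lia).
    replace (E (S k) (S n)) with (fps_deriv (E (S k)) n / INR (S n))
      by (unfold fps_deriv; field; auto).
    rewrite fps_deriv_pow_exp_minus_one, !IHn.
    change (stirling2 (S n) (S k)) with (S k * stirling2 n (S k) + stirling2 n k)%nat.
    rewrite plus_INR, mult_INR, (fact_simpl n), (fact_simpl k), !mult_INR.
    assert (INR (fact n) <> 0) by apply INR_fact_neq_0.
    field; auto.
Qed.

Theorem mainTheorem10 (n p : nat) (hp : (1 <= p)%nat) :
  pBell n p = INR (fact p) * iter_int p (bell_poly n) 1.
Proof.
  rewrite iter_int_bell_poly; unfold pBell; rewrite !scal_sum.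
  apply sum_eq; intros k _.
  rewrite coef_pow_exp_minus_one, pow1; unfold Binomial.C.
  replace (k + p - p)%nat with k by lia.
  assert (H1 := INR_fact_neq_0 n). assert (H2 := INR_fact_neq_0 k).
  assert (H3 := INR_fact_neq_0 p). assert (H4 := INR_fact_neq_0 (k + p)).
  field; auto.
Qed.
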